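(* Let $k$ be a perfect field, let $G$ be a reductive algebraic group over $k$ (not necessarily connected), and let $V$ be a finite-dimensional rational $G$-module, with everything defined over $k$. Let $\gamma\in V(k)$, let $\lambda\in\Lambda(\gamma,k)_{\min}$ and let $p\in P(\lambda)(k)$. Then $\lambda\in\Lambda(p\cdot\gamma,k)_{\min}$, and the limit points $\lim_{t\to0}\lambda(t)\cdot\gamma$ and $\lim_{t\to0}\lambda(t)\cdot(p\cdot\gamma)$ lie in the same $G(k)$-orbit.
   Context: $X_*(G)_k$ is the set of cocharacters $\mathrm{GL}(1)\to G$ defined over $k$. For $\lambda\in X_*(G)$ and $v\in V$, the limit $\lim_{t\to0}\lambda(t)\cdot v$ exists and equals $x$ if there is a morphism $\ell\colon\mathbb A^1\to V$ with $\ell(t)=\lambda(t)\cdot v$ for $t\ne0$ and $\ell(0)=x$. A vector is semisimple if its $G$-orbit is Zariski closed. For $\lambda\in X_*(G)$, $V_{\lambda,0}=\{v\in V:\lambda(t)\cdot v=v\text{ for all }t\}$, and $P(\lambda)=\{g\in G:\lim_{t\to0}\lambda(t)g\lambda(t)^{-1}\text{ exists}\}$ (limit for the conjugation action of $G$ on itself); it is an algebraic group defined over $k$ when $\lambda$ is. $\Lambda(\gamma,k)_{\min}$ is the set of those $\lambda\in X_*(G)_k$ which minimize $\dim V_{\lambda,0}$ among all $\lambda\in X_*(G)_k$ for which $\lim_{t\to0}\lambda(t)\cdot\gamma$ exists and is semisimple. *)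

(* linear algebraic groups modelled concretely as Zariski-closed
   subgroups of GL_n(K), K an algebraic closure of the perfect field k. *)
From HB Require Import structures.
From mathcomp Require Import all_boot all_order all_algebra.
From mathcomp Require Import mpoly.
Set Implicit Arguments. Unset Strict Implicit. Unset Printing Implicit Defensive.
Import Order.TTheory GRing.Theory Num.Theory.
Local Open Scope ring_scope.

Section AlgGroups.
Variable K : closedFieldType.

Definition is_subfield (k : {pred K}) : Prop :=
  [/\ 1 \in k, {in k &, forall x y, x - y \in k},
      {in k &, forall x y, x * y \in k} & {in k, forall x, x^-1 \in k}].

Definition algebraic_over (k : {pred K}) : Prop :=
  forall x : K, exists2 q : {poly K}, (q != 0) && (q \is a polyOver k) & root q x.

Definition perfect (k : {pred K}) : Prop :=
  forall p : nat, p \in [pchar K] -> {in k, forall x, exists2 y, y \in k & y ^+ p = x}.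

(** entries in k, i.e. k-rational points *)
Definition mx_over (k : {pred K}) m n (A : 'M[K]_(m, n)) : Prop :=
  forall i j, A i j \in k.

Variable n : nat.

Definition mcoords (A : 'M[K]_n) : 'I_(n * n) -> K := fun i => mxvec A 0 i.

(** coordinates (entries, det^-1) of an element of GL_n : coordinate ring of GL_n *)
Definition glcoords (A : 'M[K]_n) : 'I_(n * n).+1 -> K :=
  fun i => if unlift ord_max i is Some j then mxvec A 0 j else (\det A)^-1.

Definition gl_closed (Z : 'M[K]_n -> Prop) : Prop :=
  exists F : {mpoly K[n * n]} -> Prop,
    forall A, Z A <-> (A \in unitmx /\ forall f, F f -> f.@[mcoords A] = 0).

Definition gl_closed_over (k : {pred K}) (Z : 'M[K]_n -> Prop) : Prop :=
  exists F : {mpoly K[n * n]} -> Prop,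
    (forall f, F f -> f \is a mpolyOver _ k) /\
    forall A, Z A <-> (A \in unitmx /\ forall f, F f -> f.@[mcoords A] = 0).

Definition is_subgroup (H : 'M[K]_n -> Prop) : Prop :=
  [/\ H 1%:M, forall A B, H A -> H B -> H (A *m B) & forall A, H A -> H (invmx A)].

Definition alg_group_over (k : {pred K}) (G : 'M[K]_n -> Prop) : Prop :=
  is_subgroup G /\ gl_closed_over k G.

Definition zconnected (U : 'M[K]_n -> Prop) : Prop :=
  forall Z1 Z2, gl_closed Z1 -> gl_closed Z2 ->
    (forall A, U A -> Z1 A \/ Z2 A) ->
    (forall A, U A -> Z1 A -> Z2 A -> False) ->
    (forall A, U A -> Z1 A) \/ (forall A, U A -> Z2 A).

Definition unipotent (A : 'M[K]_n) : Prop := (A - 1%:M) ^+ n = 0.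

(** reductive (not necessarily connected): the unipotent radical of G° is trivial,
    i.e. every closed connected normal unipotent subgroup of G is trivial *)
Definition reductive (G : 'M[K]_n -> Prop) : Prop :=
  forall U : 'M[K]_n -> Prop,
    is_subgroup U -> gl_closed U -> zconnected U -> (forall A, U A -> G A) ->
    (forall g u, G g -> U u -> U (g *m u *m invmx g)) ->
    (forall u, U u -> unipotent u) ->
    forall u, U u -> u = 1%:M.

Variable m : nat.

Definition rational_rep_over (k : {pred K}) (G : 'M[K]_n -> Prop)
    (rho : 'M[K]_n -> 'M[K]_m) : Prop :=
  [/\ rho 1%:M = 1%:M,
      forall A B, G A -> G B -> rho (A *m B) = rho A *m rho B &
      exists P : 'M[{mpoly K[(n * n).+1]}]_m,
        (forall i j, P i j \is a mpolyOver _ k) /\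
        forall A, G A -> rho A = \matrix_(i, j) (P i j).@[glcoords A]].

(** cocharacters GL_1 -> G defined over k; values at t = 0 are irrelevant *)
Definition cochar_over (k : {pred K}) (G : 'M[K]_n -> Prop) (lam : K -> 'M[K]_n) : Prop :=
  [/\ forall t, t != 0 -> G (lam t),
      forall s t, s != 0 -> t != 0 -> lam (s * t) = lam s *m lam t &
      exists (d : nat) (Q : 'M[{poly K}]_n),
        (forall i j, Q i j \is a polyOver k) /\
        forall t, t != 0 -> lam t = t ^- d *: \matrix_(i, j) (Q i j).[t]].

(** lim_{t->0} f t = x : f extends to a morphism A^1 -> K^m with value x at 0 *)
Definition vlim (f : K -> 'cV[K]_m) (x : 'cV[K]_m) : Prop :=
  exists L : 'cV[{poly K}]_m,
    (forall t, t != 0 -> f t = \matrix_(i, j) (L i j).[t]) /\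
    x = \matrix_(i, j) (L i j).[0].

Definition vcoords (v : 'cV[K]_m) : 'I_m -> K := fun i => v i 0.

Definition v_closed (S : 'cV[K]_m -> Prop) : Prop :=
  exists F : {mpoly K[m]} -> Prop,
    forall v, S v <-> (forall f, F f -> f.@[vcoords v] = 0).

(** semisimple: the G-orbit (over the algebraic closure) is Zariski closed *)
Definition semisimple (G : 'M[K]_n -> Prop) (rho : 'M[K]_n -> 'M[K]_m) (v : 'cV[K]_m) : Prop :=
  v_closed (fun w => exists2 g, G g & w = rho g *m v).

Definition fixspace_dim (rho : 'M[K]_n -> 'M[K]_m) (lam : K -> 'M[K]_n) (d : nat) : Prop :=
  exists W : 'M[K]_m,
    (forall v : 'rV[K]_m,
        (v <= W)%MS <-> (forall t, t != 0 -> rho (lam t) *m v^T = v^T)) /\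
    \rank W = d.

Definition Lambda_cand (k : {pred K}) (G : 'M[K]_n -> Prop) (rho : 'M[K]_n -> 'M[K]_m)
    (v : 'cV[K]_m) (lam : K -> 'M[K]_n) : Prop :=
  cochar_over k G lam /\
  exists2 x, vlim (fun t => rho (lam t) *m v) x & semisimple G rho x.

Definition Lambda_min (k : {pred K}) (G : 'M[K]_n -> Prop) (rho : 'M[K]_n -> 'M[K]_m)
    (v : 'cV[K]_m) (lam : K -> 'M[K]_n) : Prop :=
  Lambda_cand k G rho v lam /\
  forall mu d d', Lambda_cand k G rho v mu ->
    fixspace_dim rho lam d -> fixspace_dim rho mu d' -> (d <= d')%N.

Definition Pgroup (G : 'M[K]_n -> Prop) (lam : K -> 'M[K]_n) (g : 'M[K]_n) : Prop :=
  G g /\ exists L : 'M[{poly K}]_n,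
    (forall t, t != 0 -> lam t *m g *m invmx (lam t) = \matrix_(i, j) (L i j).[t]) /\
    G (\matrix_(i, j) (L i j).[0]).

End AlgGroups.

(* Put p0 := lim_{t->0} lam(t) p lam(t)^-1, which exists and lies in G since
   p is in P(lam).  As lam(t) p = (lam(t) p lam(t)^-1) lam(t), the path
   lam(t).(p.gamma) is rho(lam(t) p lam(t)^-1) applied to lam(t).gamma; both
   factors are polynomial in t, so the limit of the former is rho(p0) applied
   to the limit of the latter, and translating by G preserves closed orbits.
   Writing lam(t) = t^-d Q(t), the conjugate L(t) = lam(t) p lam(t)^-1 solves
   L Q = Q p, i.e. det Q . L = Q p adj Q with coefficients in k, so p0 = L(0)
   is k-rational.  Finally p^-1 mu p is a candidate for gamma whenever mu is
   one for p.gamma, with a fixed space of the same dimension, so lam stays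
   minimal. *)
From HB Require Import structures.
From mathcomp Require Import all_boot all_order all_algebra.
From mathcomp Require Import mpoly.
Import Order.TTheory GRing.Theory Num.Theory.
Local Open Scope ring_scope.
Set Implicit Arguments. Unset Strict Implicit. Unset Printing Implicit Defensive.

Lemma mxOver_det (R : comNzRingType) (S : subringClosed R) n (A : 'M[R]_n) :
  A \is a mxOver S -> \det A \in S.
Proof.
move/mxOverP => AS; rewrite /determinant rpred_sum // => s _.
by rewrite rpredM ?rpredX ?rpredN ?rpred1 // rpred_prod.
Qed.

Lemma mxOver_adj (R : comNzRingType) (S : subringClosed R) n (A : 'M[R]_n) :
  A \is a mxOver S -> \adj A \is a mxOver S.
Proof.
move/mxOverP => AS; apply/mxOverP => i j; rewrite mxE /cofactor.
rewrite rpredM ?rpredX ?rpredN ?rpred1 // mxOver_det //.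
by apply/mxOverP => a b; rewrite !mxE.
Qed.

Section PolyEval.
Variable K : closedFieldType.

Lemma eq_poly_nz (p q : {poly K}) :
  (forall t, t != 0 -> p.[t] = q.[t]) -> p = q.
Proof.
move=> pq; apply/eqP; rewrite -subr_eq0; apply/negPn/negP => r_neq0.
set r := p - q in r_neq0.
(* 'X * r vanishes everywhere, so 'X * r + 1 is a nonconstant polynomial without roots. *)
have Xr0 x : ('X * r).[x] = 0.
  rewrite hornerM hornerX; have [->|x0] := eqVneq x 0; first by rewrite mul0r.
  by rewrite /r hornerD hornerN pq // subrr mulr0.
have size_Xr1 : size ('X * r + 1) != 1%N.
  have size_Xr : size ('X * r) = (size r).+1 by rewrite mulrC size_mulX.
  have r_gt0 : (0 < size r)%N by rewrite lt0n size_poly_eq0.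
  by rewrite size_polyDl size_Xr ?size_poly1 ?ltnS //= eqSS -lt0n.
case/closed_rootP: size_Xr1 => x /rootP.
by rewrite hornerD Xr0 hornerC add0r => /eqP; rewrite oner_eq0.
Qed.

Definition mx_eval a b (L : 'M[{poly K}]_(a, b)) (t : K) : 'M[K]_(a, b) :=
  \matrix_(i, j) (L i j).[t].

Lemma mx_evalE a b (L : 'M[{poly K}]_(a, b)) t :
  mx_eval L t = map_mx (horner_eval t) L.
Proof. by apply/matrixP => i j; rewrite !mxE. Qed.

Lemma mx_evalM a b c (L1 : 'M[{poly K}]_(a, b)) (L2 : 'M[{poly K}]_(b, c)) t :
  mx_eval (L1 *m L2) t = mx_eval L1 t *m mx_eval L2 t.
Proof. by rewrite !mx_evalE map_mxM. Qed.

Lemma mx_evalC a b (A : 'M[K]_(a, b)) t : mx_eval (map_mx polyC A) t = A.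
Proof. by apply/matrixP => i j; rewrite !mxE hornerC. Qed.

Lemma eq_mx_eval_nz a b (L1 L2 : 'M[{poly K}]_(a, b)) :
  (forall t, t != 0 -> mx_eval L1 t = mx_eval L2 t) -> L1 = L2.
Proof.
move=> L12; apply/matrixP => i j; apply: eq_poly_nz => t t0.
by have := congr1 (fun M : 'M[K]_(a, b) => M i j) (L12 t t0); rewrite !mxE.
Qed.

Lemma horner_mmap N (f : {mpoly K[N]}) (q : 'I_N -> {poly K}) t :
  (mmap polyC q f).[t] = f.@[fun i => (q i).[t]].
Proof.
rewrite /mmap mevalE -horner_evalE rmorph_sum; apply: eq_bigr => mm _.
rewrite rmorphM rmorph_prod /= horner_evalE hornerC; congr (_ * _).
by apply: eq_bigr => i _; rewrite rmorphXn.
Qed.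

Lemma det_conj_eval n (lam : K -> 'M[K]_n) (p : 'M[K]_n) (L : 'M[{poly K}]_n) :
    (forall t, t != 0 -> lam t \in unitmx) ->
    (forall t, t != 0 -> lam t *m p *m invmx (lam t) = mx_eval L t) ->
  \det L = (\det p)%:P.
Proof.
move=> lamU lamL; apply: eq_poly_nz => t t0.
rewrite hornerC -horner_evalE -det_map_mx -mx_evalE -lamL //.
have det_lam : \det (lam t) != 0 by rewrite -unitfE -unitmxE lamU.
by rewrite !det_mulmx det_inv mulrAC mulfV ?mul1r.
Qed.

Variable m : nat.

Lemma vlim_mulmx (f f' : K -> 'cV[K]_m) x (R : 'M[{poly K}]_m) :
    vlim f x -> (forall t, t != 0 -> f' t = mx_eval R t *m f t) ->
  vlim f' (mx_eval R 0 *m x).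
Proof.
case=> L [fL ->] f'f; exists (R *m L); split.
  by move=> t t0; rewrite f'f // fL // -mx_evalM.
by rewrite -[RHS]/(mx_eval _ 0) mx_evalM.
Qed.

Lemma vlim_unique (f : K -> 'cV[K]_m) x y : vlim f x -> vlim f y -> x = y.
Proof.
case=> L [fL ->] [L' [fL' ->]]; congr mx_eval.
by apply: eq_mx_eval_nz => t t0; rewrite /mx_eval -fL -?fL'.
Qed.

End PolyEval.

Section OverSubfield.
Variables (K : closedFieldType) (k : {pred K}).
Hypothesis hk : is_subfield k.

Lemma subfield_divring_closed : GRing.divring_closed k.
Proof.
case: hk => k1 kB kM kV; split => // x y xk yk.
by apply: kM => //; apply: kV.
Qed.
HB.instance Definition _ :=
  GRing.isDivringClosed.Build K k subfield_divring_closed.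

(* The lowest nonzero coefficient D`_e of D gives M`_e = D`_e * L`_0. *)
Lemma polyOver_quot_coef0 (D L M : {poly K}) :
    D \is a polyOver k -> M \is a polyOver k -> D != 0 -> D * L = M ->
  L`_0 \in k.
Proof.
move=> /polyOverP Dk /polyOverP Mk D_neq0 DLM.
have exD : exists i, D`_i != 0.
  by exists (size D).-1; rewrite -lead_coefE lead_coef_eq0.
case: (ex_minnP exD) => e De e_min.
have ME : M`_e = D`_e * L`_0.
  rewrite -DLM coefM big_ord_recr /= subnn big1 ?add0r // => -[j /= je] _.
  suff -> : D`_j = 0 by rewrite mul0r.
  by apply/eqP; apply: contraTT je => /e_min; rewrite leqNgt.
have -> : L`_0 = (D`_e)^-1 * M`_e by rewrite ME mulKf.
by rewrite rpredM ?rpredV.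
Qed.

Lemma mx_over_invmx n (p : 'M[K]_n) :
  p \in unitmx -> mx_over k p -> mx_over k (invmx p).
Proof.
move=> pU pk; have pk' : p \is a mxOver k by apply/mxOverP.
rewrite /invmx pU => i j; rewrite mxE rpredM ?rpredV ?mxOver_det //.
by move/mxOverP: (mxOver_adj pk'); apply.
Qed.

Lemma polyC_mxOver a b (A : 'M[K]_(a, b)) :
  mx_over k A -> map_mx polyC A \is a mxOver (polyOver k).
Proof. by move=> Ak; apply/mxOverP => i j; rewrite mxE polyOverC. Qed.

Lemma intertwiner_eval0_over n (Q L : 'M[{poly K}]_n) (p : 'M[K]_n) :
    Q \is a mxOver (polyOver k) -> \det Q != 0 -> mx_over k p ->
    L *m Q = Q *m map_mx polyC p ->
  mx_over k (mx_eval L 0).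
Proof.
move=> Qk detQ pk LQ i j; rewrite mxE horner_coef0.
have DL : \det Q *: L = Q *m map_mx polyC p *m \adj Q.
  by rewrite -LQ -mulmxA mul_mx_adj mul_mx_scalar.
have := congr1 (fun A : 'M[{poly K}]_n => A i j) DL; rewrite mxE.
apply: polyOver_quot_coef0 detQ; first exact: mxOver_det.
by move/mxOverP: (mxOverM (mxOverM Qk (polyC_mxOver pk)) (mxOver_adj Qk)); apply.
Qed.

End OverSubfield.

Section RationalRep.
Variables (K : closedFieldType) (k : {pred K}).
Hypothesis hk : is_subfield k.
HB.instance Definition _ :=
  GRing.isDivringClosed.Build K k (subfield_divring_closed hk).

Variables (n m : nat) (G : 'M[K]_n -> Prop) (rho : 'M[K]_n -> 'M[K]_m).
Hypotheses (hG : alg_group_over k G) (hrho : rational_rep_over k G rho).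

Lemma group_unit A : G A -> A \in unitmx.
Proof. by case: hG => _ [F [_ GF]] /GF []. Qed.

Lemma groupM A B : G A -> G B -> G (A *m B).
Proof. by case: hG => -[] _ GM _ _; apply: GM. Qed.

Lemma groupV A : G A -> G (invmx A).
Proof. by case: hG => -[] _ _ GV _; apply: GV. Qed.

Lemma rho1 : rho 1%:M = 1%:M.
Proof. by case: hrho. Qed.

Lemma rhoM A B : G A -> G B -> rho (A *m B) = rho A *m rho B.
Proof. by case: hrho => _ rM _; apply: rM. Qed.

Lemma rho_mulVmx g : G g -> rho (invmx g) *m rho g = 1%:M.
Proof.
by move=> Gg; have GVg := groupV Gg; rewrite -rhoM // (mulVmx (group_unit Gg)) rho1.
Qed.

Lemma rho_mulmxV g : G g -> rho g *m rho (invmx g) = 1%:M.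
Proof.
by move=> Gg; have GVg := groupV Gg; rewrite -rhoM // (mulmxV (group_unit Gg)) rho1.
Qed.

Lemma rho_conj (p A : 'M[K]_n) : G p -> G A ->
  rho (invmx p *m A *m p) = rho (invmx p) *m rho A *m rho p.
Proof. by move=> Gp GA; have GVp := groupV Gp; rewrite !rhoM //; apply: groupM. Qed.

Lemma semisimple_act g x : G g -> semisimple G rho x -> semisimple G rho (rho g *m x).
Proof.
move=> Gg [F orbitF]; exists F => v; rewrite -orbitF; split.
- by case=> h Gh ->; exists (h *m g); rewrite ?rhoM ?mulmxA //; apply: groupM.
- have GVg := groupV Gg.
  case=> h Gh ->; exists (h *m invmx g); first exact: groupM.
  by rewrite mulmxA rhoM // -(mulmxA (rho h)) rho_mulVmx // mulmx1.
Qed.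

(* The last GL_n coordinate (det L(t))^-1 is the constant c^-1, so every
   coordinate of L(t) is polynomial in t. *)
Lemma rho_poly_path (L : 'M[{poly K}]_n) (c : K) : \det L = c%:P ->
  exists R : 'M[{poly K}]_m,
    forall t, G (mx_eval L t) -> rho (mx_eval L t) = mx_eval R t.
Proof.
move=> detL; case: hrho => _ _ [P [_ rhoP]].
pose q i := if unlift ord_max i is Some j then mxvec L 0 j else (c^-1)%:P.
exists (\matrix_(i, j) mmap polyC q (P i j)) => t GLt.
rewrite rhoP //; apply/matrixP => i j; rewrite !mxE horner_mmap.
apply: meval_eq => l; rewrite /glcoords /q; case: (unlift ord_max l) => [j'|].
- by rewrite mx_evalE -map_mxvec mxE.
- by rewrite mx_evalE det_map_mx detL /= horner_evalE !hornerC.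
Qed.

Lemma cochar_conj_eval0_over (lam : K -> 'M[K]_n) (p : 'M[K]_n) (L : 'M[{poly K}]_n) :
    cochar_over k G lam -> mx_over k p ->
    (forall t, t != 0 -> mx_eval L t *m lam t = lam t *m p) ->
  mx_over k (mx_eval L 0).
Proof.
move=> [lamG _ [d [Q [Qk lamQ]]]] pk Llam.
have Qk' : Q \is a mxOver (polyOver k) by apply/mxOverP.
have detQ : \det Q != 0.
  apply/eqP => detQ0; have := group_unit (lamG 1 (oner_neq0 _)).
  rewrite lamQ ?oner_neq0 // expr1n invr1 scale1r -[X in X \in _]/(mx_eval Q 1).
  by rewrite unitmxE unitfE mx_evalE det_map_mx detQ0 rmorph0 eqxx.
apply: intertwiner_eval0_over Qk' detQ pk _ => //.
apply: eq_mx_eval_nz => t t0; rewrite !mx_evalM mx_evalC.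
have := Llam t t0; rewrite lamQ // -scalemxAr -scalemxAl => /scalerI -> //.
by rewrite invr_neq0 // expf_neq0.
Qed.

Lemma Pgroup_limit (lam : K -> 'M[K]_n) (p : 'M[K]_n) :
    cochar_over k G lam -> Pgroup G lam p -> mx_over k p ->
  exists2 p0, G p0 /\ mx_over k p0 &
    forall gamma x, vlim (fun t => rho (lam t) *m gamma) x ->
      vlim (fun t => rho (lam t) *m (rho p *m gamma)) (rho p0 *m x).
Proof.
move=> clam [Gp [L [lamL GL0]]] pk; have [lamG _ _] := clam.
have lamU t : t != 0 -> lam t \in unitmx by move=> t0; apply/group_unit/lamG.
have {}lamL t : t != 0 -> lam t *m p *m invmx (lam t) = mx_eval L t := lamL t.
have Llam t : t != 0 -> mx_eval L t *m lam t = lam t *m p.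
  by move=> t0; rewrite -lamL // (mulmxKV (lamU t t0)).
have GL t : t != 0 -> G (mx_eval L t).
  move=> t0; have Glt := lamG t t0.
  by rewrite -lamL //; apply: groupM (groupV Glt); apply: groupM.
have [R rhoR] := rho_poly_path (det_conj_eval lamU lamL).
exists (mx_eval L 0).
  by split=> //; apply: cochar_conj_eval0_over clam pk Llam.
move=> gamma x lim_x; rewrite rhoR //; apply: vlim_mulmx lim_x _ => t t0.
have Glt := lamG t t0; have GLt := GL t t0.
by rewrite -rhoR // mulmxA -rhoM // -Llam // rhoM // mulmxA.
Qed.

Lemma cochar_conj (mu : K -> 'M[K]_n) (p : 'M[K]_n) :
    G p -> mx_over k p -> cochar_over k G mu ->
  cochar_over k G (fun t => invmx p *m mu t *m p).
Proof.
move=> Gp pk [muG muM [d [Q [Qk muQ]]]].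
have GVp := groupV Gp; have pU := group_unit Gp.
split.
- by move=> t t0; apply: groupM => //; apply: groupM => //; apply: muG.
- by move=> s t s0 t0; rewrite muM // !mulmxA (mulmxK pU).
exists d, (map_mx polyC (invmx p) *m Q *m map_mx polyC p); split.
  have Qk' : Q \is a mxOver (polyOver k) by apply/mxOverP.
  have := mxOverM (mxOverM (polyC_mxOver hk (mx_over_invmx hk pU pk)) Qk')
    (polyC_mxOver hk pk).
  by move/mxOverP.
move=> t t0; rewrite muQ // -[RHS]/(_ *: mx_eval _ t).
by rewrite !mx_evalM !mx_evalC -scalemxAr -scalemxAl.
Qed.

Lemma fixspace_dim_conj (mu : K -> 'M[K]_n) (p : 'M[K]_n) d :
    G p -> (forall t, t != 0 -> G (mu t)) -> fixspace_dim rho mu d ->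
  fixspace_dim rho (fun t => invmx p *m mu t *m p) d.
Proof.
move=> Gp muG [W [fixW rankW]]; have GVp := groupV Gp.
have pTU : (rho p)^T \in unitmx.
  by rewrite unitmx_tr; case: (mulmx1_unit (rho_mulmxV Gp)).
exists (W *m invmx (rho p)^T); split; last first.
  by rewrite mxrankMfree // row_free_unit unitmx_inv.
move=> v; have -> : (v <= W *m invmx (rho p)^T)%MS = (v *m (rho p)^T <= W)%MS.
  apply/idP/idP; first by move/(submxMr (rho p)^T); rewrite (mulmxKV pTU).
  by move/(submxMr (invmx (rho p)^T)); rewrite (mulmxK pTU).
rewrite fixW trmx_mul trmxK; split=> fixv t t0; have Gmu := muG t t0.
- by rewrite rho_conj // -!mulmxA fixv // mulmxA rho_mulVmx // mul1mx.
- rewrite -[LHS]mul1mx -(rho_mulmxV Gp) -mulmxA; congr (_ *m _).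
  by rewrite !mulmxA -rho_conj // fixv.
Qed.

Lemma Lambda_cand_conj gamma (mu : K -> 'M[K]_n) (p : 'M[K]_n) :
    G p -> mx_over k p -> Lambda_cand k G rho (rho p *m gamma) mu ->
  Lambda_cand k G rho gamma (fun t => invmx p *m mu t *m p).
Proof.
move=> Gp pk [cmu [y lim_y ss_y]]; have GVp := groupV Gp.
split; first exact: cochar_conj.
exists (rho (invmx p) *m y); last exact: semisimple_act.
rewrite -(mx_evalC (rho (invmx p)) 0); apply: vlim_mulmx lim_y _ => t t0.
have [muG _ _] := cmu; have Gmu := muG t t0.
by rewrite mx_evalC rho_conj // !mulmxA.
Qed.

End RationalRep.

Unset Implicit Arguments. Set Strict Implicit.

Theorem lemma3p6 (K : closedFieldType) (k : {pred K})
  (hk : is_subfield k) (halg : algebraic_over k) (hperf : perfect k)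
  (n m : nat) (G : 'M[K]_n -> Prop)
  (hG : alg_group_over k G) (hred : reductive G)
  (rho : 'M[K]_n -> 'M[K]_m) (hrho : rational_rep_over k G rho)
  (gamma : 'cV[K]_m) (hgamma : mx_over k gamma)
  (lam : K -> 'M[K]_n) (hlam : Lambda_min k G rho gamma lam)
  (p : 'M[K]_n) (hp : Pgroup G lam p) (hpk : mx_over k p) :
  Lambda_min k G rho (rho p *m gamma) lam /\
  forall x1 x2 : 'cV[K]_m,
    vlim (fun t => rho (lam t) *m gamma) x1 ->
    vlim (fun t => rho (lam t) *m (rho p *m gamma)) x2 ->
    exists g : 'M[K]_n, [/\ G g, mx_over k g & x2 = rho g *m x1].
Proof.
have [[clam [x1 lim_x1 ss_x1]] lam_min] := hlam.
have [p0 [Gp0 p0k] lim_p] := Pgroup_limit hk hG hrho clam hp hpk.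
have Gp : G p by case: hp.
have cand_p : Lambda_cand k G rho (rho p *m gamma) lam.
  split=> //; exists (rho p0 *m x1); first exact: lim_p.
  exact: (semisimple_act hG hrho Gp0 ss_x1).
split; last first.
  move=> y1 y2 lim_y1 lim_y2; exists p0; split=> //.
  exact: vlim_unique lim_y2 (lim_p _ _ lim_y1).
split=> // mu d d' cand_mu fix_lam fix_mu.
apply: (lam_min _ d d' (Lambda_cand_conj hk hG hrho Gp hpk cand_mu) fix_lam).
have [[muG _ _] _] := cand_mu.
exact: (fixspace_dim_conj hG hrho Gp muG fix_mu).
Qed.
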